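(* Let $I\subset\mathbb{R}$ be an interval, let $a,b,c,d,f,g,h:I\to\mathbb{R}$ be given functions with $a(t)\neq0$ on $I$, and let $y\in\mathbb{R}$ be a parameter. Suppose $\mu>0,\alpha,\beta,\gamma,\delta,\varepsilon,\kappa_1,\kappa_2$ are differentiable functions on $I$ satisfying the modified Riccati system $$\alpha'+b=2c\alpha+4a\alpha^2,\quad \beta'=(c+4a\alpha)\beta,\quad \gamma'=a\beta^2,\quad \delta'+2\alpha g=(c+4a\alpha)\delta+f,$$ $$\varepsilon'=(2a\delta-g)\beta,\quad \kappa_1'=a\delta^2-g\delta+he^{\kappa_2},\quad \kappa_2'=-he^{\kappa_2},$$ together with $\alpha=-\dfrac{\mu'}{4a\mu}-\dfrac{d}{2a}$. Then $$\psi(x,t)=\frac{1}{\sqrt{\mu(t)}}e^{\alpha x^2+\beta xy+\gamma y^2+\delta x+\varepsilon y+\kappa_1},\qquad \varphi(x,t)=\frac{1}{\sqrt{\mu(t)}}e^{\alpha x^2+\beta xy+\gamma y^2+\delta x+\varepsilon y+\kappa_1+\kappa_2}$$ (with all coefficient functions evaluated at $t$) solve the system $$\psi_t=a(t)\psi_{xx}-(b(t)x^2-d(t)-xf(t))\psi-(g(t)-c(t)x)\psi_x+h(t)\varphi,$$ $$\varphi_t=a(t)\varphi_{xx}-(b(t)x^2-d(t)-xf(t))\varphi-(g(t)-c(t)x)\varphi_x.$$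
   Context: All functions are real-valued; primes denote derivatives with respect to $t$. *)

From Stdlib Require Import Reals.
From Coquelicot Require Import Coquelicot.
Open Scope R_scope.

Definition in_interval (lo hi : Rbar) (t : R) : Prop :=
  Rbar_lt lo t /\ Rbar_lt t hi.

Definition expo (alpha beta gamma delta eps kappa1 : R -> R) (y x t : R) : R :=
  alpha t * x ^ 2 + beta t * x * y + gamma t * y ^ 2 + delta t * x
  + eps t * y + kappa1 t.

Definition psi_sol (mu alpha beta gamma delta eps kappa1 : R -> R) (y x t : R) : R :=
  / sqrt (mu t) * exp (expo alpha beta gamma delta eps kappa1 y x t).

Definition phi_sol (mu alpha beta gamma delta eps kappa1 kappa2 : R -> R)
  (y x t : R) : R :=
  / sqrt (mu t) * exp (expo alpha beta gamma delta eps kappa1 y x t + kappa2 t).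

(* Both functions are Gaussians [psi = mu^(-1/2) exp E] with [E] quadratic in
   [x]: each derivative of [psi] is [psi] times a polynomial in [x], so
   substituting into the equation and dividing by [psi] leaves a polynomial
   identity in [x] and [y] whose coefficients are the Riccati system; the
   condition linking [alpha] and [mu] absorbs the normalisation [mu^(-1/2)].
   What is left over is the forcing [(kappa1' - a delta^2 + g delta) psi],
   which is [h phi] for [psi].  Since [phi] is the same Gaussian with [kappa1]
   replaced by [kappa1 + kappa2], its forcing is [h e^kappa2 - h e^kappa2 = 0]. *)
From Stdlib Require Import Reals Lra FunctionalExtensionality.
From Coquelicot Require Import Coquelicot.
Open Scope R_scope.

Section GaussianAnsatz.

Variables (mu alpha beta gamma delta eps kappa : R -> R) (y : R).

Local Notation psi := (psi_sol mu alpha beta gamma delta eps kappa y).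
Local Notation slope t z := (2 * alpha t * z + beta t * y + delta t).

Lemma is_derive_psi_x t z :
  is_derive (fun z => psi z t) z (slope t z * psi z t).
Proof. unfold psi_sol, expo. auto_derive; [easy | cbn [pow]; ring]. Qed.

Lemma Derive_psi_x t z : Derive (fun z => psi z t) z = slope t z * psi z t.
Proof. apply is_derive_unique, is_derive_psi_x. Qed.

Lemma is_derive2_psi_x t z :
  is_derive (fun z => Derive (fun z => psi z t) z) z
    ((slope t z ^ 2 + 2 * alpha t) * psi z t).
Proof.
  eapply is_derive_ext. { intros u. symmetry. apply Derive_psi_x. }
  unfold psi_sol, expo. auto_derive; [easy | cbn [pow]; ring].
Qed.

Lemma ex_derive2_psi_x t z : ex_derive_n (fun z => psi z t) 2 z.
Proof. eexists. apply is_derive2_psi_x. Qed.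

Lemma Derive2_psi_x t z :
  Derive_n (fun z => psi z t) 2 z = (slope t z ^ 2 + 2 * alpha t) * psi z t.
Proof. apply is_derive_unique, is_derive2_psi_x. Qed.

Lemma is_derive_psi_t x t :
  0 < mu t -> ex_derive mu t -> ex_derive alpha t -> ex_derive beta t ->
  ex_derive gamma t -> ex_derive delta t -> ex_derive eps t ->
  ex_derive kappa t ->
  is_derive (fun s => psi x s) t
    ((- Derive mu t / (2 * mu t)
      + expo (Derive alpha) (Derive beta) (Derive gamma) (Derive delta)
             (Derive eps) (Derive kappa) y x t) * psi x t).
Proof.
  intros Hmu Dmu Dalpha Dbeta Dgamma Ddelta Deps Dkappa.
  unfold psi_sol, expo.
  assert (Hsqrt := sqrt_lt_R0 _ Hmu).
  auto_derive.
  - repeat split; auto; lra.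
  - (* [auto_derive] leaves the coefficients eta-expanded, which [field] would
       treat as atoms distinct from [Derive mu t], ... *)
    repeat match goal with
      |- context [fun s : R => ?F s] => change (fun s : R => F s) with F
    end.
    replace (2 * mu t) with (2 * (sqrt (mu t) * sqrt (mu t)))
      by (rewrite sqrt_sqrt; lra).
    cbn [pow]. field. lra.
Qed.

Variables (a b c d f g : R -> R).

Lemma psi_solves_forced_equation x t :
  a t <> 0 -> 0 < mu t ->
  ex_derive mu t -> ex_derive alpha t -> ex_derive beta t ->
  ex_derive gamma t -> ex_derive delta t -> ex_derive eps t ->
  ex_derive kappa t ->
  Derive alpha t + b t = 2 * c t * alpha t + 4 * a t * alpha t ^ 2 ->
  Derive beta t = (c t + 4 * a t * alpha t) * beta t ->
  Derive gamma t = a t * beta t ^ 2 ->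
  Derive delta t + 2 * alpha t * g t = (c t + 4 * a t * alpha t) * delta t + f t ->
  Derive eps t = (2 * a t * delta t - g t) * beta t ->
  alpha t = - (Derive mu t / (4 * a t * mu t)) - d t / (2 * a t) ->
  is_derive (fun s => psi x s) t
    (a t * Derive_n (fun z => psi z t) 2 x
     - (b t * x ^ 2 - d t - x * f t) * psi x t
     - (g t - c t * x) * Derive (fun z => psi z t) x
     + (Derive kappa t - a t * delta t ^ 2 + g t * delta t) * psi x t).
Proof.
  intros Ha Hmu Dmu Dalpha Dbeta Dgamma Ddelta Deps Dkappa
    Ealpha Ebeta Egamma Edelta Eeps Emu.
  assert (Emu' : Derive mu t = - (4 * a t * alpha t + 2 * d t) * mu t).
  { rewrite Emu. field. split; lra. }
  rewrite Derive2_psi_x, Derive_psi_x.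
  match goal with |- is_derive _ _ ?l =>
    replace l with ((- Derive mu t / (2 * mu t)
      + expo (Derive alpha) (Derive beta) (Derive gamma) (Derive delta)
             (Derive eps) (Derive kappa) y x t) * psi x t) end.
  - apply is_derive_psi_t; assumption.
  - unfold expo.
    rewrite Emu', Ebeta, Egamma, Eeps.
    replace (Derive alpha t) with (2 * c t * alpha t + 4 * a t * alpha t ^ 2 - b t)
      by lra.
    replace (Derive delta t)
      with ((c t + 4 * a t * alpha t) * delta t + f t - 2 * alpha t * g t) by lra.
    field. lra.
Qed.

End GaussianAnsatz.

Lemma phi_sol_psi_sol mu alpha beta gamma delta eps kappa1 kappa2 y :
  phi_sol mu alpha beta gamma delta eps kappa1 kappa2 y
  = psi_sol mu alpha beta gamma delta eps (fun t => kappa1 t + kappa2 t) y.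
Proof.
  apply functional_extensionality; intros x.
  apply functional_extensionality; intros t.
  unfold phi_sol, psi_sol, expo. f_equal. f_equal. ring.
Qed.

Theorem theorem2
  (lo hi : Rbar) (a b c d f g h : R -> R) (y : R)
  (mu alpha beta gamma delta eps kappa1 kappa2 : R -> R) :
  (forall t, in_interval lo hi t -> a t <> 0) ->
  (forall t, in_interval lo hi t -> 0 < mu t) ->
  (forall t, in_interval lo hi t ->
     ex_derive mu t /\ ex_derive alpha t /\ ex_derive beta t /\
     ex_derive gamma t /\ ex_derive delta t /\ ex_derive eps t /\
     ex_derive kappa1 t /\ ex_derive kappa2 t) ->
  (forall t, in_interval lo hi t ->
     Derive alpha t + b t = 2 * c t * alpha t + 4 * a t * alpha t ^ 2 /\
     Derive beta t = (c t + 4 * a t * alpha t) * beta t /\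
     Derive gamma t = a t * beta t ^ 2 /\
     Derive delta t + 2 * alpha t * g t
       = (c t + 4 * a t * alpha t) * delta t + f t /\
     Derive eps t = (2 * a t * delta t - g t) * beta t /\
     Derive kappa1 t = a t * delta t ^ 2 - g t * delta t + h t * exp (kappa2 t) /\
     Derive kappa2 t = - (h t * exp (kappa2 t)) /\
     alpha t = - (Derive mu t / (4 * a t * mu t)) - d t / (2 * a t)) ->
  forall x t, in_interval lo hi t ->
    let psi := psi_sol mu alpha beta gamma delta eps kappa1 y in
    let phi := phi_sol mu alpha beta gamma delta eps kappa1 kappa2 y in
    ex_derive_n (fun z => psi z t) 2 x /\
    ex_derive_n (fun z => phi z t) 2 x /\
    is_derive (fun s => psi x s) t
      (a t * Derive_n (fun z => psi z t) 2 x
       - (b t * x ^ 2 - d t - x * f t) * psi x t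
       - (g t - c t * x) * Derive (fun z => psi z t) x
       + h t * phi x t) /\
    is_derive (fun s => phi x s) t
      (a t * Derive_n (fun z => phi z t) 2 x
       - (b t * x ^ 2 - d t - x * f t) * phi x t
       - (g t - c t * x) * Derive (fun z => phi z t) x).
Proof.
  intros Ha Hmu Hex Hsys x t Ht psi phi; subst psi phi.
  destruct (Hex t Ht) as (Dmu & Dalpha & Dbeta & Dgamma & Ddelta & Deps & Dk1 & Dk2).
  destruct (Hsys t Ht)
    as (Ealpha & Ebeta & Egamma & Edelta & Eeps & Ek1 & Ek2 & Emu).
  specialize (Ha t Ht). specialize (Hmu t Ht).
  assert (Dk12 : ex_derive (fun s => kappa1 s + kappa2 s) t)
    by (apply (ex_derive_plus kappa1 kappa2); assumption).
  split; [| split; [| split]].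
  - apply ex_derive2_psi_x.
  - rewrite phi_sol_psi_sol. apply ex_derive2_psi_x.
  - assert (Hforce : h t * phi_sol mu alpha beta gamma delta eps kappa1 kappa2 y x t
      = (Derive kappa1 t - a t * delta t ^ 2 + g t * delta t)
        * psi_sol mu alpha beta gamma delta eps kappa1 y x t).
    { rewrite Ek1. unfold phi_sol, psi_sol. rewrite exp_plus. ring. }
    rewrite Hforce. apply psi_solves_forced_equation; assumption.
  - rewrite phi_sol_psi_sol.
    assert (Hforce : Derive (fun s => kappa1 s + kappa2 s) t
      - a t * delta t ^ 2 + g t * delta t = 0).
    { rewrite Derive_plus, Ek1, Ek2 by assumption. ring. }
    pose proof (psi_solves_forced_equation mu alpha beta gamma delta eps
      (fun s => kappa1 s + kappa2 s) y a b c d f g x t) as Hpsi.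
    rewrite Hforce, Rmult_0_l, Rplus_0_r in Hpsi.
    apply Hpsi; assumption.
Qed.
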